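(* Let $Y=\{Y_t,\ t\in\mathbb{Z}\}$ be an $\mathbb{N}_0$-valued process satisfying $$Y_t\mid\mathcal{F}_{t-1}\sim p(\cdot;\lambda_t(\theta^* )),\qquad \lambda_t(\theta)=f_\theta(Y_{t-1},Y_{t-2},\dots),\qquad \lambda_t(\theta^* )=\mathbb{E}(Y_t\mid\mathcal{F}_{t-1}),$$ where $\mathcal{F}_{t-1}=\sigma(Y_{t-1},Y_{t-2},\dots)$, $p(\cdot;\lambda)$ is an unknown discrete distribution, and for each $\theta$ in a compact $\Theta\subset\mathbb{R}^d$, $f_\theta$ is a non-negative measurable function on $\mathbb{N}_0^{\mathbb{N}}$. Assume $Y$ is strictly stationary and ergodic, that $\mathbb{E}Y_t^{1+\epsilon}<C$ for all $t$ for some $C>0$, $\epsilon>1$, and that assumptions (A0)–(A7) and (A$_i(\Theta)$) for $i=0,1,2$ (stated in the context) hold. Let $(\kappa_n)$ be an increasing sequence with $\kappa_n<n$, $\kappa_n\to\infty$, $\kappa_n=o(n)$ and $$\sum_{\ell\ge1}\frac{1}{\kappa_\ell}\sum_{k\ge\ell}\alpha^{(i)}_k<\infty\quad\text{for } i=0,1,2.$$ Then $$\frac{1}{\kappa_n}\sup_{\theta\in\Theta}\big|\widehat L_n(\theta)-L_n(\theta)\big|\longrightarrow0\quad\text{almost surely as } n\to\infty.$$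
   Context: Models: a model $m$ is a subset of $\{1,\dots,d\}$, $|m|$ its cardinality, $\Theta(m)=\{\theta\in\Theta:\theta_i=0\ \forall i\notin m\}$; $\mathcal{M}$ is a finite family of models containing the true model $m^*$ with $\theta^*\in\Theta(m^* )$. Define $\ell_t(\theta)=Y_t\log\lambda_t(\theta)-\lambda_t(\theta)$, $L_n(\theta)=\sum_{t=1}^n\ell_t(\theta)$, $\widehat\lambda_t(\theta)=f_\theta(Y_{t-1},\dots,Y_1,0,0,\dots)$, $\widehat L_n(\theta)=\sum_{t=1}^n(Y_t\log\widehat\lambda_t(\theta)-\widehat\lambda_t(\theta))$. Assumptions: (A$_i(\Theta)$), $i=0,1,2$: for every $y\in\mathbb{N}_0^{\mathbb{N}}$, $\theta\mapsto f_\theta(y)$ is $i$ times continuously differentiable on $\Theta$ and there is a non-negative sequence $(\alpha^{(i)}_k)_{k\ge1}$ with $\sum_k\alpha^{(0)}_k<1$ (for $i=0$), resp. $\sum_k\alpha^{(i)}_k<\infty$ (for $i=1,2$), such that $\sup_{\theta\in\Theta}\|\partial^if_\theta(y)/\partial\theta^i-\partial^if_\theta(y')/\partial\theta^i\|\le\sum_{k\ge1}\alpha^{(i)}_k|y_k-y'_k|$ for all $y,y'$. (A0) if $f_\theta(Y_{t-1},\dots)=f_{\theta'}(Y_{t-1},\dots)$ a.s. for some $t$ then $\theta=\theta'$; and $\inf_{\theta\in\Theta}f_\theta(y)\ge\underline{c}>0$ for all $y$. (A1) $\theta^*$ is an interior point of $\Theta(m^* )$. (A2) $\theta\mapsto f_\theta(y)$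 is twice continuously differentiable on $\Theta$ for every $y$. (A3) $a_t\to0$ and $Y_ta_t\to0$ as $t\to\infty$, with $a_t=\sup_{\theta\in\Theta}|\widehat\lambda_t(\theta)-\lambda_t(\theta)|$. (A4) $J(\theta^* )=\mathbb{E}\big[\lambda_t(\theta^* )^{-1}\frac{\partial\lambda_t(\theta^* )}{\partial\theta}\frac{\partial\lambda_t(\theta^* )}{\partial\theta'}\big]<\infty$ and $I(\theta^* )=\mathbb{E}\big[\frac{\mathrm{Var}(Y_t\mid\mathcal{F}_{t-1})}{\lambda_t(\theta^* )^2}\frac{\partial\lambda_t(\theta^* )}{\partial\theta}\frac{\partial\lambda_t(\theta^* )}{\partial\theta'}\big]<\infty$. (A5) for $c\in\mathbb{R}^d$, $c'\frac{\partial\lambda_t(\theta^* )}{\partial\theta}=0$ a.s. implies $c=0$. (A6) there is a neighbourhood $V(\theta^* )$ of $\theta^*$ with $\mathbb{E}\big[\sup_{\theta\in V(\theta^* )}|\partial^2\ell_t(\theta)/\partial\theta_i\partial\theta_j|\big]<\infty$ for all $i,j$. (A7) $b_t$, $b_tY_t$ and $a_td_tY_t$ are $O(t^{-h})$ for some $h>1/2$, where $b_t=\sup_{\theta\in\Theta}\mathbb{E}\big\|\frac{\partial\widehat\lambda_t(\theta)}{\partial\theta}-\frac{\partial\lambda_t(\theta)}{\partial\theta}\big\|$ and $d_t=\sup_{\theta\in\Theta}\max\big\{\mathbb{E}\big\|\widehat\lambda_t(\theta)^{-1}\frac{\partial\widehat\lambda_t(\theta)}{\partial\theta}\big\|,\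 \mathbb{E}\big\|\lambda_t(\theta)^{-1}\frac{\partial\lambda_t(\theta)}{\partial\theta}\big\|\big\}$. *)

From HB Require Import structures.
From mathcomp Require Import all_boot all_order all_algebra.
From mathcomp Require Import all_classical all_reals all_analysis.
Set Implicit Arguments. Unset Strict Implicit. Unset Printing Implicit Defensive.
Import Order.TTheory GRing.Theory Num.Theory.
Import numFieldNormedType.Exports.
Local Open Scope classical_set_scope.
Local Open Scope ring_scope.

Section Defs.
Variable R : realType.
Variable d : nat.

(* Sequences y in N_0^N are encoded as y : nat -> nat with y k = y_{k+1};
   similarly alpha k = alpha_{k+1}. *)

Definition ej (j : 'I_d) : 'rV[R]_d := delta_mx 0 j.

Definition pd (j : 'I_d) (g : 'rV[R]_d -> R) (th : 'rV[R]_d) : R :=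
  derive g th (ej j).

Definition grad (g : 'rV[R]_d -> R) (th : 'rV[R]_d) : 'rV[R]_d :=
  \row_j pd j g th.

Definition hess (g : 'rV[R]_d -> R) (th : 'rV[R]_d) : 'M[R]_d :=
  \matrix_(i, j) pd i (pd j g) th.

Definition C0_on (Th : set 'rV[R]_d) (g : 'rV[R]_d -> R) : Prop :=
  {within Th, continuous g}.

Definition C1_on (Th : set 'rV[R]_d) (g : 'rV[R]_d -> R) : Prop :=
  exists U : set 'rV[R]_d, [/\ open U, Th `<=` U &
    forall th, U th -> forall j : 'I_d,
      derivable g th (ej j) /\ {for th, continuous (pd j g)}].

Definition C2_on (Th : set 'rV[R]_d) (g : 'rV[R]_d -> R) : Prop :=
  exists U : set 'rV[R]_d, [/\ open U, Th `<=` U &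
    forall th, U th -> forall i j : 'I_d,
      [/\ derivable g th (ej j), derivable (pd j g) th (ej i),
          {for th, continuous (pd j g)} &
          {for th, continuous (pd i (pd j g))}]].

Definition Theta_m (Th : set 'rV[R]_d) (m : {set 'I_d}) : set 'rV[R]_d :=
  [set th | Th th /\ forall i : 'I_d, i \notin m -> th 0 i = 0].

(** theta is an interior point of Theta(m), interior taken relative to the
    coordinate subspace R^m = { theta : theta_i = 0 for i notin m } *)
Definition interior_model (Th : set 'rV[R]_d) (m : {set 'I_d})
    (th0 : 'rV[R]_d) : Prop :=
  Theta_m Th m th0 /\
  exists e : R, 0 < e /\ forall th : 'rV[R]_d,
    (forall i : 'I_d, i \notin m -> th 0 i = 0) ->
    `|th - th0| < e -> Theta_m Th m th.

Definition A0_Theta (Th : set 'rV[R]_d) (f : 'rV[R]_d -> (nat -> nat) -> R)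
    (al : nat -> R) : Prop :=
  (forall y, C0_on Th (fun th => f th y)) /\
  (forall k, 0 <= al k) /\
  (\sum_(0 <= k <oo) (al k)%:E < 1)%E /\
  forall (y y' : nat -> nat) th, Th th ->
    ((`|f th y - f th y'|)%:E <=
      \sum_(0 <= k <oo) (al k * `|(y k)%:R - (y' k)%:R|)%:E)%E.

Definition A1_Theta (Th : set 'rV[R]_d) (f : 'rV[R]_d -> (nat -> nat) -> R)
    (al : nat -> R) : Prop :=
  (forall y, C1_on Th (fun th => f th y)) /\
  (forall k, 0 <= al k) /\
  (\sum_(0 <= k <oo) (al k)%:E < +oo)%E /\
  forall (y y' : nat -> nat) th, Th th ->
    ((`|grad (fun t => f t y) th - grad (fun t => f t y') th|)%:E <=
      \sum_(0 <= k <oo) (al k * `|(y k)%:R - (y' k)%:R|)%:E)%E.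

Definition A2_Theta (Th : set 'rV[R]_d) (f : 'rV[R]_d -> (nat -> nat) -> R)
    (al : nat -> R) : Prop :=
  (forall y, C2_on Th (fun th => f th y)) /\
  (forall k, 0 <= al k) /\
  (\sum_(0 <= k <oo) (al k)%:E < +oo)%E /\
  forall (y y' : nat -> nat) th, Th th ->
    ((`|hess (fun t => f t y) th - hess (fun t => f t y') th|)%:E <=
      \sum_(0 <= k <oo) (al k * `|(y k)%:R - (y' k)%:R|)%:E)%E.

End Defs.

Section Process.
Context {R : realType} {d0 : measure_display} {Omega : measurableType d0}.
Variable d : nat.

Definition lam (f : 'rV[R]_d -> (nat -> nat) -> R) (Y : int -> Omega -> nat)
    (th : 'rV[R]_d) (t : int) (w : Omega) : R :=
  f th (fun k => Y (t - (k.+1)%:Z)%R w).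

Definition lamhat (f : 'rV[R]_d -> (nat -> nat) -> R) (Y : int -> Omega -> nat)
    (th : 'rV[R]_d) (t : nat) (w : Omega) : R :=
  f th (fun k => if (k.+1 < t)%N then Y (t%:Z - (k.+1)%:Z)%R w else 0%N).

Definition ell f Y th (t : int) w : R :=
  (Y t w)%:R * ln (lam f Y th t w) - lam f Y th t w.

Definition Ln f Y th (n : nat) w : R :=
  \sum_(1 <= t < n.+1) ell f Y th t%:Z w.

Definition Lnhat f Y th (n : nat) w : R :=
  \sum_(1 <= t < n.+1)
     ((Y t%:Z w)%:R * ln (lamhat f Y th t w) - lamhat f Y th t w).

Definition Fpast (Y : int -> Omega -> nat) (t : int) : set (set Omega) :=
  smallest (sigma_algebra setT)
    [set A | exists (s : int) (k : nat), (s < t)%R /\ A = [set w | Y s w = k]].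

Definition cyl_measurable_Z (B : set (int -> nat)) : Prop :=
  smallest (sigma_algebra setT)
    [set A | exists (s : int) (k : nat), A = [set y | y s = k]] B.

Definition cyl_measurable_N (B : set (nat -> nat)) : Prop :=
  smallest (sigma_algebra setT)
    [set A | exists (s : nat) (k : nat), A = [set y | y s = k]] B.

(** strict stationarity: all finite-dimensional distributions are
    shift-invariant (Y is N_0-valued, so cylinder point probabilities
    determine them) *)
Definition strictly_stationary (P : probability Omega R)
    (Y : int -> Omega -> nat) : Prop :=
  forall (s : seq (int * nat)) (h : int),
    P [set w | all (fun tk => Y tk.1 w == tk.2) s] =
    P [set w | all (fun tk => Y (tk.1 + h)%R w == tk.2) s].

Definition ergodic (P : probability Omega R) (Y : int -> Omega -> nat) : Prop :=
  forall B : set (int -> nat), cyl_measurable_Z B ->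
    (forall y, B y <-> B (fun t => y (t + 1)%R)) ->
    P [set w | B (fun t => Y t w)] = 0%E \/
    P [set w | B (fun t => Y t w)] = 1%E.

Definition a_t f Y (Th : set 'rV[R]_d) (t : nat) (w : Omega) : \bar R :=
  ereal_sup [set (`|lamhat f Y th t w - lam f Y th t%:Z w|)%:E | th in Th].

Definition b_t (P : probability Omega R) f Y (Th : set 'rV[R]_d) (t : nat)
    : \bar R :=
  ereal_sup [set (\int[P]_w
      (`|grad (fun u => lamhat f Y u t w) th
         - grad (fun u => lam f Y u t%:Z w) th|)%:E)%E | th in Th].

Definition d_t (P : probability Omega R) f Y (Th : set 'rV[R]_d) (t : nat)
    : \bar R :=
  ereal_sup [set maxe
      (\int[P]_w (`|(lamhat f Y th t w)^-1 *: grad (fun u => lamhat f Y u t w) th|)%:E)%E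
      (\int[P]_w (`|(lam f Y th t%:Z w)^-1 *: grad (fun u => lam f Y u t%:Z w) th|)%:E)%E
    | th in Th].

Definition condvar (p : R -> nat -> R) (l : R) : \bar R :=
  (\sum_(0 <= k <oo) (((k%:R - l) ^+ 2) * p l k)%:E)%E.

Definition bigO_pow (u : nat -> \bar R) (h : R) : Prop :=
  exists K : R, \forall t \near \oo,
    (`|u t| <= (K * (t%:R `^ (- h)))%:E)%E.

End Process.

From HB Require Import structures.
From mathcomp Require Import all_boot all_order all_algebra.
From mathcomp Require Import all_classical all_reals all_analysis.
From mathcomp Require Import measurable_realfun.
From mathcomp Require Import ring lra.
Set Implicit Arguments. Unset Strict Implicit. Unset Printing Implicit Defensive.
Import Order.TTheory GRing.Theory Num.Theory.
Import numFieldNormedType.Exports.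
Local Open Scope classical_set_scope.
Local Open Scope ring_scope.

(* Since [ln] is [1/c]-Lipschitz on [[c, +oo[], the contrasts satisfy
   [|hat l_t - l_t| <= (1 + Y_t / c) |hat lambda_t - lambda_t|], and by
   (A_0(Theta)) [|hat lambda_t - lambda_t| <= sum_(k >= t-1) alpha_k Y_(t-1-k)]
   uniformly in theta; call [X_t] the resulting bound.  The moment condition
   gives [E X_(l+1) <= K sum_(k >= l) alpha_k], so the assumption on [kappa]
   makes [sum_l X_(l+1) / kappa_(l+1)] integrable, hence a.s. finite, and
   Kronecker's lemma turns this into [kappa_n^-1 sum_(t <= n) X_t --> 0]. *)

Section RealInequalities.
Variable R : realType.
Implicit Types (a b c q y : R) (n m : nat).

Lemma ln_dist_le a b c : 0 < c -> c <= a -> c <= b ->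
  `|ln a - ln b| <= `|a - b| / c.
Proof.
wlog ba : a b / b <= a.
  move=> H c0 ca cb; have [ba|/ltW ab] := leP b a; first exact: H.
  by rewrite distrC [`|a - b|]distrC; exact: H.
move=> c0 ca cb.
have a0 : 0 < a by exact: lt_le_trans ca.
have b0 : 0 < b by exact: lt_le_trans cb.
have lnab : ln b <= ln a by rewrite ler_ln ?posrE.
rewrite !ger0_norm ?subr_ge0 //.
have lnabE : ln a - ln b = ln (a / b) by rewrite lnM ?posrE ?invr_gt0 // lnV ?posrE.
(* [1 + ln (a / b) <= a / b] *)
have := expR_ge1Dx (ln (a / b)); rewrite lnK ?posrE ?divr_gt0 // -lnabE => h.
have le_ab : ln a - ln b <= (a - b) / b by rewrite mulrBl divff ?gt_eqF //; lra.
apply: (le_trans le_ab); apply: ler_wpM2l; first by rewrite subr_ge0.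
by rewrite lef_pV2 ?posrE.
Qed.

Lemma poisson_contrast_dist_le y a b c : 0 <= y -> 0 < c -> c <= a -> c <= b ->
  `|(y * ln a - a) - (y * ln b - b)| <= (1 + y / c) * `|a - b|.
Proof.
move=> y0 c0 ca cb; have hl := ler_wpM2l y0 (ln_dist_le c0 ca cb).
rewrite (_ : _ - _ = y * (ln a - ln b) - (a - b)); last by ring.
apply: le_trans (ler_normB _ _) _; rewrite normrM (ger0_norm y0).
rewrite (_ : (1 + y / c) * _ = `|a - b| + y * (`|a - b| / c)); last by ring.
lra.
Qed.

Lemma natr_le_powR n q : 1 <= q -> n%:R <= n%:R `^ q :> R.
Proof.
move=> q1; case: n => [|n]; first by rewrite powR_ge0.
by rewrite -{1}[n.+1%:R]powRr1 // ler_powR // ler1n.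
Qed.

Lemma natr_sqr_le_powR n q : 2 <= q -> n%:R ^+ 2 <= n%:R `^ q :> R.
Proof.
move=> q2; case: n => [|n]; first by rewrite expr2 mul0r powR_ge0.
by rewrite -powR_mulrn // ler_powR // ler1n.
Qed.

Lemma mixed_moment_le n m c q : 0 < c -> 2 <= q ->
  (1 + n%:R / c) * m%:R <= (1 + c^-1) * (n%:R `^ q + m%:R `^ q) :> R.
Proof.
move=> c0 q2.
have hn := natr_sqr_le_powR n q2; have hm := natr_sqr_le_powR m q2.
have mq := natr_le_powR m (le_trans (ler1n R 2) q2).
have nq0 : 0 <= n%:R `^ q :> R by exact: powR_ge0.
have nm : n%:R * m%:R <= n%:R `^ q + m%:R `^ q :> R.
  by move: hn hm; rewrite !expr2; nra.
have ic0 : 0 <= c^-1 by rewrite invr_ge0 ltW.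
have := ler_wpM2l ic0 nm.
rewrite (_ : (1 + n%:R / c) * m%:R = m%:R + c^-1 * (n%:R * m%:R)); last by ring.
rewrite mulrDl mul1r; lra.
Qed.

End RealInequalities.

Section Integrals.
Context {d : measure_display} {Omega : measurableType d} {R : realType}.
Variable mu : {measure set Omega -> \bar R}.

Lemma measurable_fun_natvalued d' (T : measurableType d')
    (Z : Omega -> nat) (h : nat -> T) :
  (forall k, measurable [set w | Z w = k]) -> measurable_fun setT (h \o Z).
Proof.
move=> mZ _ B mB; rewrite setTI.
have -> : (h \o Z) @^-1` B = \bigcup_(k in [set k | B (h k)]) [set w | Z w = k].
  by apply/seteqP; split => [w Bw|w [k Bk /= ->]] //; exists (Z w).
by apply: bigcup_measurable => k _; exact: mZ.
Qed.

Lemma measurable_fun_natvalued2 d' (T : measurableType d')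
    (Z1 Z2 : Omega -> nat) (h : nat -> nat -> T) :
  (forall k, measurable [set w | Z1 w = k]) ->
  (forall k, measurable [set w | Z2 w = k]) ->
  measurable_fun setT (fun w => h (Z1 w) (Z2 w)).
Proof.
move=> mZ1 mZ2 _ B mB; rewrite setTI.
have -> : (fun w => h (Z1 w) (Z2 w)) @^-1` B =
    \bigcup_(k in setT) \bigcup_(j in [set j | B (h k j)])
      ([set w | Z1 w = k] `&` [set w | Z2 w = j]).
  apply/seteqP; split => [w Bw|w [k _ [j Bj [/= -> ->]]]] //.
  by exists (Z1 w) => //; exists (Z2 w).
by apply: bigcup_measurable => k _; apply: bigcup_measurable => j _; exact: measurableI.
Qed.

Local Open Scope ereal_scope.

Lemma integral_mixed_moment_le (Z1 Z2 : Omega -> nat) (c q C : R) :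
  (forall k, measurable [set w | Z1 w = k]) ->
  (forall k, measurable [set w | Z2 w = k]) ->
  (0 < c)%R -> (2 <= q)%R ->
  \int[mu]_w ((Z1 w)%:R `^ q)%:E < C%:E ->
  \int[mu]_w ((Z2 w)%:R `^ q)%:E < C%:E ->
  \int[mu]_w ((1 + (Z1 w)%:R / c) * (Z2 w)%:R)%:E <= ((1 + c^-1) * (C + C))%:E.
Proof.
move=> mZ1 mZ2 c0 q2 mom1 mom2.
have mpow (Z : Omega -> nat) : (forall k, measurable [set w | Z w = k]) ->
    measurable_fun setT (fun w => ((Z w)%:R `^ q)%:E).
  by move=> mZ; exact: (measurable_fun_natvalued (fun n => ((n%:R : R) `^ q)%:E) mZ).
have pow0 (Z : Omega -> nat) (w : Omega) : 0 <= ((Z w)%:R `^ q)%:E :> \bar R.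
  by rewrite lee_fin powR_ge0.
have ic0 : (0 <= 1 + c^-1)%R by rewrite addr_ge0 // invr_ge0 ltW.
apply: (@le_trans _ _ (\int[mu]_w ((1 + c^-1)%:E *
    (((Z1 w)%:R `^ q)%:E + ((Z2 w)%:R `^ q)%:E)))).
  apply: ge0_le_integral => //.
  - by move=> w _; rewrite lee_fin mulr_ge0 // addr_ge0 // divr_ge0 // ltW.
  - exact: (measurable_fun_natvalued2
      (fun n m => ((1 + (n%:R : R) / c) * m%:R)%:E) mZ1 mZ2).
  - by apply: emeasurable_funM => //; apply: emeasurable_funD; exact: mpow.
  - by move=> w _; rewrite -EFinD -EFinM lee_fin mixed_moment_le.
rewrite ge0_integralZl_EFin //; last first.
- by apply: emeasurable_funD; exact: mpow.
- by move=> w _; rewrite adde_ge0.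
rewrite ge0_integralD //; [|exact: mpow|exact: mpow].
by rewrite EFinM lee_wpmul2l ?lee_fin // EFinD leeD // ltW.
Qed.

Lemma ae_nneseries_lty (X : nat -> Omega -> \bar R) :
  (forall l, measurable_fun setT (X l)) -> (forall l w, 0 <= X l w) ->
  \sum_(0 <= l <oo) \int[mu]_w X l w < +oo ->
  {ae mu, forall w, \sum_(0 <= l <oo) X l w < +oo}.
Proof.
move=> mX X0 EX.
have mS : measurable_fun setT (fun w => \sum_(0 <= l <oo) X l w).
  exact: ge0_emeasurable_sum (fun l w _ _ => X0 l w) (fun l _ => mX l).
have S0 w : 0 <= \sum_(0 <= l <oo) X l w by apply: nneseries_ge0.
have Sint : mu.-integrable setT (fun w => \sum_(0 <= l <oo) X l w).
  apply/integrableP; split => //; under eq_integral do rewrite gee0_abs //.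
  by rewrite integral_nneseries.
apply: filterS (integrable_ae measurableT Sint) => w /(_ I).
by rewrite ge0_fin_numE.
Qed.

End Integrals.

Lemma limn_esup_le (R : realType) (u v : (\bar R)^nat) (l : \bar R) :
  v @ \oo --> l -> (\forall n \near \oo, (u n <= v n)%E) -> (limn_esup u <= l)%E.
Proof.
move=> vl [N _ uv]; rewrite limn_esup_lim -(cvg_lim _ (cvg_esups vl)) //.
apply: lee_lim; [exact: is_cvg_esups|exact: is_cvg_esups|].
near=> n; apply: ge_ereal_sup => _ [k /= nk <-].
apply: le_trans (uv k _) (ereal_sup_ubound _); last by exists k.
by rewrite /= (leq_trans _ nk) //; near: n; exists N.
Unshelve. all: end_near.
Qed.

Section Kronecker.
Context {R : realType}.
Variables (kappa : nat -> R) (x : nat -> \bar R).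
Hypothesis kappa_gt0 : forall n, (0 < n)%N -> 0 < kappa n.
Hypothesis kappa_nondecr :
  forall n m, (0 < n)%N -> (n <= m)%N -> kappa n <= kappa m.
Hypothesis x_ge0 : forall t, (0 <= x t)%E.

Local Open Scope ereal_scope.

Let y l := ((kappa l.+1)^-1)%:E * x l.+1.

Let y_ge0 l : 0 <= y l.
Proof. by rewrite mule_ge0 // lee_fin invr_ge0 ltW // kappa_gt0. Qed.

Lemma kronecker_term_le l m : (l < m)%N -> x l.+1 <= (kappa m)%:E * y l.
Proof.
move=> lm; rewrite /y muleA -EFinM -[X in X <= _]mul1e lee_wpmul2r // lee_fin.
by rewrite ler_pdivlMr ?mul1r ?kappa_gt0 // kappa_nondecr.
Qed.

Lemma kronecker_partial_sum_le N n : (0 < N)%N -> (N <= n)%N ->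
  \sum_(0 <= l < n) x l.+1 <=
  (kappa N)%:E * \sum_(0 <= l <oo) y l + (kappa n)%:E * \sum_(N <= l <oo) y l.
Proof.
move=> N0 Nn; rewrite (big_cat_nat (n := N)) //=.
have sum_le a b m : (0 < m)%N -> (b <= m)%N ->
    \sum_(a <= l < b) x l.+1 <= (kappa m)%:E * \sum_(a <= l <oo) y l.
  move=> m0 bm; apply: (@le_trans _ _ ((kappa m)%:E * \sum_(a <= l < b) y l)).
    rewrite ge0_sume_distrr // big_nat_cond [leRHS]big_nat_cond.
    by apply: lee_sum => l /andP[/andP[_ lb] _]; rewrite kronecker_term_le // (leq_trans lb).
  apply: lee_wpmul2l; first by rewrite lee_fin ltW // kappa_gt0.
  exact: nneseries_lim_ge.
by rewrite leeD // sum_le // (leq_trans N0).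
Qed.

Theorem kronecker_nneseries : kappa @ \oo --> +oo%R ->
  \sum_(0 <= l <oo) y l < +oo ->
  (fun n => ((kappa n)^-1)%:E * \sum_(1 <= t < n.+1) x t) @ \oo --> 0.
Proof.
move=> kappa_oo S_lty; set S := \sum_(0 <= l <oo) y l in S_lty.
have S_ge0 : 0 <= S by exact: nneseries_ge0.
have S_fin : S \is a fin_num by rewrite ge0_fin_numE.
have kappaV0 : (fun n => (kappa n)^-1)%R @ \oo --> 0%R.
  by apply/gtr0_cvgV0 => //; near=> n; apply: kappa_gt0; near: n; exists 1%N.
apply: limn_esup_le_cvg => [|[|n]]; last 2 first.
- by rewrite big_geq // mule0.
- by rewrite mule_ge0 ?sume_ge0 // lee_fin invr_ge0 ltW ?kappa_gt0.
apply: (cvge_to_ge (nneseries_tail_cvg S_lty (fun l _ => y_ge0 l))).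
near=> N; have N0 : (0 < N)%N by near: N; exists 1%N.
apply: (limn_esup_le (v := fun n => (kappa N * fine S * (kappa n)^-1)%:E
                                     + \sum_(N <= l <oo) y l)).
  rewrite -[X in _ --> X]add0e; apply: cvgeD.
  - by rewrite ge0_adde_def // inE ?nneseries_ge0.
  - apply: cvg_EFin; first by near=> n.
    by rewrite -(mulr0 (kappa N * fine S)%R); exact: cvgMl_tmp kappaV0.
  - exact: cvg_cst.
near=> n; have Nn : (N <= n)%N by near: n; exists N.
have kn0 : (0 < kappa n)%R by rewrite kappa_gt0 // (leq_trans N0).
rewrite big_add1 /=.
apply: le_trans (lee_wpmul2l _ (kronecker_partial_sum_le N0 Nn)) _.
  by rewrite lee_fin invr_ge0 ltW.
have tail_ge0 : 0 <= \sum_(N <= l <oo) y l by exact: nneseries_ge0.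
rewrite muleDr //; last first.
  by rewrite ge0_adde_def // inE mule_ge0 // lee_fin ltW // kappa_gt0.
rewrite !muleA -!EFinM mulVf ?gt_eqF // mul1e -/S -(fineK S_fin) -EFinM /=.
by rewrite [(_ * kappa N)%R]mulrC mulrAC.
Unshelve. all: end_near.
Qed.

End Kronecker.

Section ContrastTruncation.
Context {R : realType} {d0 : measure_display} {Omega : measurableType d0}.
Variables (d : nat) (Th : set 'rV[R]_d) (f : 'rV[R]_d -> (nat -> nat) -> R).
Variables (Y : int -> Omega -> nat) (al : nat -> R) (c : R).
Hypothesis Y_measurable : forall t k, measurable [set w | Y t w = k].
Hypothesis c_gt0 : 0 < c.
Hypothesis f_ge : forall th y, Th th -> c <= f th y.
Hypothesis al_ge0 : forall k, 0 <= al k.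
Hypothesis f_lipschitz : forall (y y' : nat -> nat) th, Th th ->
  ((`|f th y - f th y'|)%:E <=
    \sum_(0 <= k <oo) (al k * `|(y k)%:R - (y' k)%:R|)%:E)%E.

(* The lag [Y_(t-k-1)] when [lamhat] replaces it by [0], i.e. when [t-k-1 <= 0]. *)
Definition truncated_lag (t k : nat) (w : Omega) : R :=
  if (k.+1 < t)%N then 0 else (Y (t%:Z - k.+1%:Z) w)%:R.

Lemma truncated_lag_ge0 t k w : 0 <= truncated_lag t k w.
Proof. by rewrite /truncated_lag; case: ifP. Qed.

Lemma truncated_lag_le t k w : truncated_lag t k w <= (Y (t%:Z - k.+1%:Z) w)%:R.
Proof. by rewrite /truncated_lag; case: ifP. Qed.

Definition ell_err_bound (t : nat) (w : Omega) : \bar R :=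
  \sum_(0 <= k <oo) ((1 + (Y t%:Z w)%:R / c) * (al k * truncated_lag t k w))%:E.

Local Open Scope ereal_scope.

Lemma lamhat_lam_dist_le th t w : Th th ->
  (`|lamhat f Y th t w - lam f Y th t%:Z w|)%:E <=
  \sum_(0 <= k <oo) (al k * truncated_lag t k w)%:E.
Proof.
move=> Thth; apply: (le_trans (f_lipschitz _ _ Thth)).
apply: lee_nneseries => [k _ _|k _]; first by rewrite lee_fin mulr_ge0.
rewrite lee_fin /truncated_lag /=; case: ifP => _; first by rewrite subrr normr0.
by rewrite sub0r normrN ger0_norm.
Qed.

Lemma ell_dist_le th t w : Th th ->
  (`|((Y t%:Z w)%:R * ln (lamhat f Y th t w) - lamhat f Y th t w)
     - ell f Y th t%:Z w|)%:E <= ell_err_bound t w.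
Proof.
move=> Thth; rewrite /ell_err_bound; under eq_eseriesr do rewrite EFinM.
rewrite nneseriesZl; last by move=> k _; rewrite lee_fin mulr_ge0 ?truncated_lag_ge0.
apply: le_trans (_ : ((1 + (Y t%:Z w)%:R / c) *
  `|lamhat f Y th t w - lam f Y th t%:Z w|)%:E <= _).
  by rewrite lee_fin poisson_contrast_dist_le ?f_ge.
by rewrite EFinM lee_wpmul2l ?lamhat_lam_dist_le // lee_fin addr_ge0 // divr_ge0 // ltW.
Qed.

Lemma ereal_sup_Lnhat_Ln_le n w :
  ereal_sup [set (`|Lnhat f Y th n w - Ln f Y th n w|)%:E | th in Th] <=
  \sum_(1 <= t < n.+1) ell_err_bound t w.
Proof.
apply: ge_ereal_sup => _ [th Thth <-]; rewrite /Lnhat /Ln -sumrB.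
apply: (@le_trans _ _ (\sum_(1 <= t < n.+1) (`|((Y t%:Z w)%:R *
    ln (lamhat f Y th t w) - lamhat f Y th t w) - ell f Y th t%:Z w|)%:E)).
  by rewrite sumEFin lee_fin ler_norm_sum.
by apply: lee_sum => t _; exact: ell_dist_le.
Qed.

Lemma ell_err_term_ge0 t k w :
  (0 <= (1 + (Y t%:Z w)%:R / c) * (al k * truncated_lag t k w))%R.
Proof.
by rewrite mulr_ge0 ?mulr_ge0 ?addr_ge0 ?divr_ge0 ?truncated_lag_ge0 ?(ltW c_gt0).
Qed.

Lemma ell_err_bound_ge0 t w : (0 <= ell_err_bound t w)%E.
Proof. by apply: nneseries_ge0 => k _ _; rewrite lee_fin ell_err_term_ge0. Qed.

Lemma measurable_ell_err_term t k :
  measurable_fun setT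
    (fun w => ((1 + (Y t%:Z w)%:R / c) * (al k * truncated_lag t k w))%:E).
Proof.
exact: (measurable_fun_natvalued2 (fun i j => ((1 + i%:R / c) *
  (al k * if (k.+1 < t)%N then 0 else j%:R))%:E) (Y_measurable _) (Y_measurable _)).
Qed.

Lemma measurable_ell_err_bound t : measurable_fun setT (ell_err_bound t).
Proof.
apply: ge0_emeasurable_sum => [k w _ _|k _]; last exact: measurable_ell_err_term.
by rewrite lee_fin ell_err_term_ge0.
Qed.

Section Moments.
Variables (mu : {measure set Omega -> \bar R}) (q C : R).
Hypothesis q_ge2 : (2 <= q)%R.
Hypothesis moment_lt : forall t, \int[mu]_w ((Y t w)%:R `^ q)%:E < C%:E.

Lemma integral_ell_err_bound_le l :
  \int[mu]_w ell_err_bound l.+1 w <=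
  ((1 + c^-1) * (C + C))%:E * \sum_(l <= k <oo) (al k)%:E.
Proof.
rewrite integral_nneseries //; first last.
- by move=> k w _; rewrite lee_fin ell_err_term_ge0.
- by move=> k; exact: measurable_ell_err_term.
rewrite (@nneseries_split _ _ 0 l); last first.
  by move=> k _; apply: integral_ge0 => w _; rewrite lee_fin ell_err_term_ge0.
rewrite add0n big_nat_cond big1 ?add0e; last first.
  move=> k /andP[/andP[_ kl] _]; apply: integral0_eq => w _.
  by rewrite /truncated_lag ltnS kl !mulr0.
rewrite -nneseriesZl; last by move=> k _; rewrite lee_fin.
apply: lee_nneseries => [k _ _|k _].
  by apply: integral_ge0 => w _; rewrite lee_fin ell_err_term_ge0.
set s := (l.+1%:Z - k.+1%:Z)%R.
have mixed_ge0 w : (0 <= (1 + (Y l.+1%:Z w)%:R / c) * (Y s w)%:R)%R.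
  by rewrite mulr_ge0 // addr_ge0 // divr_ge0 // ltW.
have mixed_measurable : measurable_fun setT
    (fun w => ((1 + (Y l.+1%:Z w)%:R / c) * (Y s w)%:R)%:E).
  exact: (measurable_fun_natvalued2 (fun i j => ((1 + i%:R / c) * j%:R)%:E)
    (Y_measurable _) (Y_measurable _)).
apply: (@le_trans _ _ (\int[mu]_w ((al k)%:E *
    ((1 + (Y l.+1%:Z w)%:R / c) * (Y s w)%:R)%:E))).
  apply: ge0_le_integral => //.
  - by move=> w _; rewrite lee_fin ell_err_term_ge0.
  - exact: measurable_ell_err_term.
  - exact: emeasurable_funM.
  move=> w _; rewrite -EFinM lee_fin mulrCA; apply: ler_wpM2l => //.
  apply: ler_wpM2l; first by rewrite addr_ge0 // divr_ge0 // ltW.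
  exact: truncated_lag_le.
rewrite ge0_integralZl_EFin //; last by move=> w _; rewrite lee_fin.
rewrite muleC lee_wpmul2r ?lee_fin //.
exact: integral_mixed_moment_le (Y_measurable _) (Y_measurable _) c_gt0 q_ge2
  (moment_lt _) (moment_lt _).
Qed.

Lemma ae_weighted_ell_err_bound_lty (kappa : nat -> R) :
  (forall n, (0 < n)%N -> (0 < kappa n)%R) ->
  \sum_(0 <= l <oo) ((kappa l.+1)^-1)%:E * \sum_(l <= k <oo) (al k)%:E < +oo ->
  {ae mu, forall w,
    \sum_(0 <= l <oo) ((kappa l.+1)^-1)%:E * ell_err_bound l.+1 w < +oo}.
Proof.
move=> kappa_gt0 kappa_al_lty.
have kappaV_ge0 l : (0 <= (kappa l.+1)^-1)%R by rewrite invr_ge0 ltW ?kappa_gt0.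
have tail_ge0 l : 0 <= \sum_(l <= k <oo) (al k)%:E.
  by apply: nneseries_ge0 => k _ _; rewrite lee_fin.
have C_gt0 : (0 < C)%R.
  rewrite -lte_fin; apply: le_lt_trans (moment_lt 0).
  by apply: integral_ge0 => w _; rewrite lee_fin powR_ge0.
set K := ((1 + c^-1) * (C + C))%R.
have K_ge0 : (0 <= K)%R by rewrite mulr_ge0 ?addr_ge0 ?invr_ge0 ?ltW.
apply: ae_nneseries_lty.
- by move=> l; apply: emeasurable_funM => //; exact: measurable_ell_err_bound.
- by move=> l w; rewrite mule_ge0 ?lee_fin ?ell_err_bound_ge0.
apply: (@le_lt_trans _ _ (K%:E * \sum_(0 <= l <oo)
    ((kappa l.+1)^-1)%:E * \sum_(l <= k <oo) (al k)%:E)); last first.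
  by rewrite lte_mul_pinfty ?lee_fin.
rewrite -nneseriesZl; last by move=> l _; rewrite mule_ge0 ?lee_fin.
apply: lee_nneseries => [l _ _|l _].
  by apply: integral_ge0 => w _; rewrite mule_ge0 ?lee_fin ?ell_err_bound_ge0.
rewrite ge0_integralZl_EFin //.
- by rewrite muleCA lee_wpmul2l ?lee_fin // integral_ell_err_bound_le.
- by move=> w _; exact: ell_err_bound_ge0.
- exact: measurable_ell_err_bound.
Qed.

End Moments.

End ContrastTruncation.

Theorem lemma1
  (R : realType) (d0 : measure_display) (Omega : measurableType d0)
  (P : probability Omega R)
  (Y : int -> Omega -> nat)
  (d : nat) (Th : set 'rV[R]_d)
  (f : 'rV[R]_d -> (nat -> nat) -> R)
  (p : R -> nat -> R)
  (ths : 'rV[R]_d) (ms : {set 'I_d}) (M : {set {set 'I_d}})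
  (al0 al1 al2 : nat -> R) (kappa : nat -> R) (C eps : R)
  (* Y is an N_0-valued process (each Y_t is a random variable) *)
  (HYmeas : forall (t : int) (k : nat), measurable [set w | Y t w = k])
  (* p(. ; lambda) is a discrete distribution on N_0 *)
  (Hp : forall l : R, 0 < l ->
        (forall k, 0 <= p l k) /\ (\sum_(0 <= k <oo) (p l k)%:E = 1)%E)
  (* Theta is a compact subset of R^d *)
  (HTh : compact Th)
  (* each f_theta is non-negative and measurable on N_0^N *)
  (Hf : forall th, Th th ->
        (forall y, 0 <= f th y) /\
        (forall B : set R, measurable B -> cyl_measurable_N (f th @^-1` B)))
  (* the models: m* in M, theta* in Theta(m* ) *)
  (HM : ms \in M) (Hths : Theta_m Th ms ths)
  (* Y_t | F_{t-1} ~ p(. ; lambda_t(theta* )) *)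
  (Hcond : forall (t : int) (k : nat) (A : set Omega), Fpast Y t A ->
     P (A `&` [set w | Y t w = k]) =
     (\int[P]_(w in A) (p (lam f Y ths t w) k)%:E)%E)
  (* lambda_t(theta* ) = E(Y_t | F_{t-1}) *)
  (Hce : forall (t : int) (A : set Omega), Fpast Y t A ->
     (\int[P]_(w in A) ((Y t w)%:R)%:E)%E =
     (\int[P]_(w in A) (lam f Y ths t w)%:E)%E)
  (* strict stationarity and ergodicity *)
  (Hstat : strictly_stationary P Y)
  (Herg : ergodic P Y)
  (* moment condition *)
  (HC : 0 < C) (Heps : 1 < eps)
  (Hmom : forall t : int,
     (\int[P]_w (((Y t w)%:R `^ (1 + eps))%:E) < C%:E)%E)
  (* (A_i(Theta)), i = 0, 1, 2 *)
  (HA0T : A0_Theta Th f al0) (HA1T : A1_Theta Th f al1)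
  (HA2T : A2_Theta Th f al2)
  (* (A0) *)
  (HA0 : (forall (th th' : 'rV[R]_d) (t : int), Th th -> Th th' ->
            {ae P, forall w, lam f Y th t w = lam f Y th' t w} -> th = th') /\
         (exists c : R, 0 < c /\ forall th y, Th th -> c <= f th y))
  (* (A1) *)
  (HA1 : interior_model Th ms ths)
  (* (A2) *)
  (HA2 : forall y, C2_on Th (fun th => f th y))
  (* (A3) *)
  (HA3 : {ae P, forall w,
     (a_t f Y Th ^~ w @ \oo --> 0%E) /\
     ((fun t : nat => ((Y t%:Z w)%:R)%:E * a_t f Y Th t w)%E @ \oo --> 0%E)})
  (* (A4) *)
  (HA4 : forall (t : int) (i j : 'I_d),
     (\int[P]_w (`|(lam f Y ths t w)^-1
                    * pd i (fun u => lam f Y u t w) ths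
                    * pd j (fun u => lam f Y u t w) ths|)%:E < +oo)%E /\
     (\int[P]_w `|condvar p (lam f Y ths t w)
                  * ((lam f Y ths t w ^+ 2)^-1
                     * pd i (fun u => lam f Y u t w) ths
                     * pd j (fun u => lam f Y u t w) ths)%:E| < +oo)%E)
  (* (A5) *)
  (HA5 : forall (t : int) (c : 'rV[R]_d),
     {ae P, forall w, \sum_(i < d) c 0 i * pd i (fun u => lam f Y u t w) ths = 0} ->
     c = 0)
  (* (A6) *)
  (HA6 : exists V : set 'rV[R]_d, nbhs ths V /\
     forall (t : int) (i j : 'I_d),
     (\int[P]_w ereal_sup
         [set (`|pd i (pd j (fun u => ell f Y u t w)) th|)%:E | th in V]
       < +oo)%E)
  (* (A7) *)
  (HA7 : exists h : R, 1 / 2 < h /\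
     bigO_pow (b_t P f Y Th) h /\
     {ae P, forall w,
        bigO_pow (fun t : nat => b_t P f Y Th t * ((Y t%:Z w)%:R)%:E)%E h} /\
     {ae P, forall w,
        bigO_pow (fun t : nat =>
          a_t f Y Th t w * d_t P f Y Th t * ((Y t%:Z w)%:R)%:E)%E h})
  (* the sequence kappa_n *)
  (Hkinc : forall n m : nat, (0 < n)%N -> (n < m)%N -> kappa n < kappa m)
  (Hkpos : forall n : nat, (0 < n)%N -> 0 < kappa n < n%:R)
  (Hkinf : kappa @ \oo --> +oo)
  (Hko : (fun n : nat => kappa n / n%:R) @ \oo --> 0)
  (Hksum : forall al, al = al0 \/ al = al1 \/ al = al2 ->
     (\sum_(0 <= l <oo)
        ((kappa l.+1)^-1)%:E * (\sum_(l <= k <oo) (al k)%:E) < +oo)%E) :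
  {ae P, forall w,
    (fun n : nat => ((kappa n)^-1)%:E *
       ereal_sup [set (`|Lnhat f Y th n w - Ln f Y th n w|)%:E | th in Th])%E
    @ \oo --> 0%E}.
Proof.
have [c [c_gt0 f_ge]] := HA0.2.
have [_ [al0_ge0 [_ f_lipschitz]]] := HA0T.
have kappa_gt0 n : (0 < n)%N -> 0 < kappa n by move=> n0; case/andP: (Hkpos n n0).
have kappa_nondecr n m : (0 < n)%N -> (n <= m)%N -> kappa n <= kappa m.
  by move=> n0; rewrite leq_eqVlt => /predU1P[-> //|nm]; exact/ltW/Hkinc.
have eps_ge2 : 2 <= 1 + eps by lra.
apply: filterS (ae_weighted_ell_err_bound_lty HYmeas c_gt0 al0_ge0 eps_ge2 Hmom
  kappa_gt0 (Hksum al0 (or_introl erefl))) => w weighted_lty.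
have err_ge0 t := ell_err_bound_ge0 Y c_gt0 al0_ge0 t w.
apply: squeeze_cvge (cvg_cst 0%E)
  (kronecker_nneseries kappa_gt0 kappa_nondecr err_ge0 Hkinf weighted_lty).
near=> n; have kappaV_ge0 : 0 <= (kappa n)^-1.
  by rewrite invr_ge0 ltW // kappa_gt0 //; near: n; exists 1%N.
have sup_ge0 : (0 <= ereal_sup
    [set (`|Lnhat f Y th n w - Ln f Y th n w|)%:E | th in Th])%E.
  by apply: le_ereal_sup_tmp; exists (`|Lnhat f Y ths n w - Ln f Y ths n w|)%:E;
    [exists ths; first by case: Hths|].
rewrite mule_ge0 ?lee_fin //=; apply: lee_wpmul2l; first by rewrite lee_fin.
exact: ereal_sup_Lnhat_Ln_le c_gt0 f_ge al0_ge0 f_lipschitz n w.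
Unshelve. all: end_near.
Qed.
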